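(* Let $D\subset\mathbb R^d$ be compact and let $L_1,L_2$ be compact metric spaces. Let $\varphi_i:D\times L_i\to\mathbb R^n$ ($i=1,2$) be continuous maps such that (a) they are $\alpha$-Hölder with respect to $x$: there are $C>0$ and $\alpha\in(0,1]$ with $\|\varphi_i(\xi,x)-\varphi_i(\xi,y)\|\le C\,\rho_i(x,y)^\alpha$ for all $\xi\in D$, $x,y\in L_i$ ($\rho_i$ the metric of $L_i$); and (b) there is $M>0$ such that for all $x_1\in L_1$, $x_2\in L_2$, $\xi,\xi'\in D$, the function $\Phi(\xi,x_1,x_2)=\varphi_1(\xi,x_1)-\varphi_2(\xi,x_2)$ satisfies $\|\Phi(\xi',x_1,x_2)-\Phi(\xi,x_1,x_2)\|\ge M|\xi'-\xi|$. Then $\Delta=\{\xi\in D:\varphi_1(\xi,L_1)\cap\varphi_2(\xi,L_2)\neq\varnothing\}$ is a compact set and $$\dim_H\Delta\le\min\left\{\frac{\dim_H(L_1\times L_2)}{\alpha},\,d\right\}.$$ *)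

From HB Require Import structures.
From mathcomp Require Import all_boot all_order all_algebra.
From mathcomp Require Import all_classical all_reals.
From mathcomp Require Import ereal topology normedtype sequences exp.
Set Implicit Arguments. Unset Strict Implicit. Unset Printing Implicit Defensive.
Import Order.TTheory GRing.Theory Num.Theory.
Local Open Scope classical_set_scope.
Local Open Scope ring_scope.

Definition is_metric (R : realType) (T : Type) (rho : T -> T -> R) : Prop :=
  (forall x y, 0 <= rho x y) /\ (forall x y, rho x y = 0 <-> x = y) /\
  (forall x y, rho x y = rho y x) /\
  (forall x y z, rho x z <= rho x y + rho y z).

Definition metric_compact (R : realType) (T : Type) (rho : T -> T -> R)
    (A : set T) : Prop :=
  forall u : nat -> T, (forall k, A (u k)) ->
    exists (phi : nat -> nat) (x : T),
      A x /\ (forall k, (phi k < phi k.+1)%N) /\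
      (forall e : R, 0 < e -> exists N, forall k, (N <= k)%N -> rho (u (phi k)) x < e).

Definition eucl (R : realType) (k : nat) (v : 'rV[R]_k) : R :=
  Num.sqrt (\sum_(i < k) v ord0 i ^+ 2).
Definition euc_dist (R : realType) (k : nat) (v w : 'rV[R]_k) : R := eucl (v - w).

Definition prod_dist (R : realType) (T1 T2 : Type) (rho1 : T1 -> T1 -> R)
    (rho2 : T2 -> T2 -> R) (p q : T1 * T2) : R :=
  Num.max (rho1 p.1 q.1) (rho2 p.2 q.2).

Local Open Scope ereal_scope.

(* diameter, with diam set0 = 0 *)
Definition diam (R : realType) (T : Type) (rho : T -> T -> R) (U : set T) : \bar R :=
  ereal_sup ([set 0%:E] `|` [set (rho x y)%:E | x in U & y in U]).

Definition hausdorff_approx (R : realType) (T : Type) (rho : T -> T -> R)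
    (s delta : R) (A : set T) : \bar R :=
  ereal_inf [set \sum_(0 <= i <oo) ((fine (diam rho (U i))) `^ s)%:E
            | U in [set U : nat -> set T |
                    A `<=` \bigcup_i U i /\ forall i, diam rho (U i) <= delta%:E]].

Definition hausdorff_measure (R : realType) (T : Type) (rho : T -> T -> R)
    (s : R) (A : set T) : \bar R :=
  ereal_sup [set hausdorff_approx rho s delta A | delta in [set d : R | (0 < d)%R]].

Definition hausdorff_dim (R : realType) (T : Type) (rho : T -> T -> R)
    (A : set T) : \bar R :=
  ereal_inf [set s%:E | s in [set s : R | (0 < s)%R /\ hausdorff_measure rho s A = 0]].

From HB Require Import structures.
From mathcomp Require Import all_boot all_order all_algebra.
From mathcomp Require Import all_classical all_reals.
From mathcomp Require Import ereal topology normedtype sequences exp.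
From mathcomp Require Import lra.
Set Implicit Arguments. Unset Strict Implicit. Unset Printing Implicit Defensive.
Import Order.TTheory GRing.Theory Num.Theory.
Local Open Scope classical_set_scope.
Local Open Scope ring_scope.

(* Delta is closed in the compact set D: a limit of coincidence points is again
   one, by joint continuity of phi1 and phi2.  For the dimension bound, the
   transversality condition (b) together with the Hoelder condition (a) gives
     M |xi - xi'| <= n (C + C) rho((x1, x2), (y1, y2)) ^ alpha
   whenever phi1 xi x1 = phi2 xi x2 and phi1 xi' y1 = phi2 xi' y2, so Delta is
   the image of L1 x L2 under an alpha-Hoelder correspondence.  Such an image
   turns a delta-cover of L1 x L2 with small sum of diam ^ s into a cover of
   Delta with small sum of diam ^ (s / alpha); hence H^s(L1 x L2) = 0 forces
   H^(s / alpha)(Delta) = 0.  The bound by d is the grid covering of a bounded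
   subset of R^d. *)

Section EuclideanNorm.
Variables (R : realType) (k : nat).
Implicit Types (u v : 'rV[R]_k) (h : R).

Lemma normr_coord_le_eucl v i : `|v ord0 i| <= eucl v.
Proof.
rewrite /eucl -sqrtr_sqr ler_sqrt; last by apply: sumr_ge0 => j _; exact: sqr_ge0.
by rewrite (bigD1 i) //= lerDl; apply: sumr_ge0 => j _; exact: sqr_ge0.
Qed.

Lemma eucl_le_sum_normr v : eucl v <= \sum_i `|v ord0 i|.
Proof.
have [sq_le sum_ge0] : \sum_i v ord0 i ^+ 2 <= (\sum_i `|v ord0 i|) ^+ 2 /\
                       0 <= \sum_i `|v ord0 i|.
  apply: (big_ind2 (fun a b => a <= b ^+ 2 /\ 0 <= b)) => [|a1 a2 b1 b2 [h1 h2] [h3 h4]|i _].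
  - by rewrite expr2 mulr0.
  - split; last exact: addr_ge0.
    rewrite sqrrD; apply: le_trans (lerD h1 h3) _.
    by rewrite -addrA lerD2l lerDr mulrn_wge0 // mulr_ge0.
  - by rewrite -normrX ger0_norm ?sqr_ge0.
by rewrite /eucl -(ger0_norm sum_ge0) -sqrtr_sqr ler_sqrt // sqr_ge0.
Qed.

Lemma eucl_le_box v h : (forall i, `|v ord0 i| <= h) -> eucl v <= k%:R * h.
Proof.
move=> vh; apply: le_trans (eucl_le_sum_normr v) _.
apply: le_trans (ler_sum _ (fun i _ => vh i)) _.
by rewrite sumr_const card_ord mulr_natl.
Qed.

Lemma euclD_le u v : eucl (u + v) <= k%:R * (eucl u + eucl v).
Proof.
apply: eucl_le_box => i; rewrite mxE; apply: le_trans (ler_normD _ _) _.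
by apply: lerD; exact: normr_coord_le_eucl.
Qed.

Lemma euclN v : eucl (- v) = eucl v.
Proof. by congr Num.sqrt; apply: eq_bigr => i _; rewrite mxE sqrrN. Qed.

Lemma euc_distC u v : euc_dist u v = euc_dist v u.
Proof. by rewrite /euc_dist -euclN opprB. Qed.

Lemma eucl_le0 v : eucl v <= 0 -> v = 0.
Proof.
move=> v0; apply/matrixP => i j; rewrite ord1 mxE; apply/normr0_eq0/le_anti.
by rewrite normr_ge0 andbT (le_trans (normr_coord_le_eucl v j)).
Qed.

End EuclideanNorm.

Section Diameter.
Variables (R : realType) (T : Type) (rho : T -> T -> R).
Implicit Types (U : set T) (b : R).
Local Open Scope ereal_scope.

Lemma diam_ge0 U : 0 <= diam rho U.
Proof. by apply: ereal_sup_ubound; left. Qed.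

Lemma fine_diam_ge0 U : (0 <= fine (diam rho U))%R.
Proof. exact/fine_ge0/diam_ge0. Qed.

Lemma diam_le U b :
  (0 <= b)%R -> (forall x y, U x -> U y -> (rho x y <= b)%R) -> diam rho U <= b%:E.
Proof.
move=> b0 Ub; apply/ereal_supP => _ [->|[x Ux [y Uy <-]]]; rewrite lee_fin //.
exact: Ub.
Qed.

Lemma diam_set0 : diam rho set0 = 0.
Proof. by apply/le_anti; rewrite diam_ge0 diam_le. Qed.

Section BoundedDiameter.
Variables (U : set T) (b : R).
Hypothesis Ub : diam rho U <= b%:E.

Lemma fine_diamK : (fine (diam rho U))%:E = diam rho U.
Proof. by rewrite fineK // ge0_fin_numE ?diam_ge0 // (le_lt_trans Ub) ?ltry. Qed.

Lemma fine_diam_le : (fine (diam rho U) <= b)%R.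
Proof. by rewrite -lee_fin fine_diamK. Qed.

Lemma le_fine_diam x y : U x -> U y -> (rho x y <= fine (diam rho U))%R.
Proof.
move=> Ux Uy; rewrite -lee_fin fine_diamK.
by apply: ereal_sup_ubound; right; exists x => //; exists y.
Qed.

End BoundedDiameter.
End Diameter.

Definition delta_cover (R : realType) (T : Type) (rho : T -> T -> R) (del : R)
    (A : set T) (U : nat -> set T) : Prop :=
  A `<=` \bigcup_i U i /\ forall i, (diam rho (U i) <= del%:E)%E.

Definition hausdorff_sum (R : realType) (T : Type) (rho : T -> T -> R) (s : R)
    (U : nat -> set T) : \bar R :=
  \sum_(0 <= i <oo) ((fine (diam rho (U i))) `^ s)%:E.

Lemma lee_of_gtr (R : realType) (x y : \bar R) :
  (forall r : R, (y < r%:E)%E -> (x <= r%:E)%E) -> (x <= y)%E.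
Proof.
case: y => [t| |] xy; [apply/lee_addgt0Pr => e e0 | exact: leey |].
  by rewrite -EFinD; apply: xy; rewrite lte_fin ltrDl.
by rewrite (eq_ninfty (fun r => xy r (ltNyr r))).
Qed.

Section HausdorffMeasure.
Variables (R : realType) (T : Type) (rho : T -> T -> R).
Implicit Types (A : set T) (s : R).
Local Open Scope ereal_scope.

Lemma hausdorff_sum_ge0 s U : 0 <= hausdorff_sum rho s U.
Proof. by apply: nneseries_ge0 => i _ _; rewrite lee_fin powR_ge0. Qed.

Lemma hausdorff_approx_ge0 s del A : 0 <= hausdorff_approx rho s del A.
Proof. by apply/ereal_infP => _ [U _ <-]; exact: hausdorff_sum_ge0. Qed.

Lemma hausdorff_measure_eq0P s A :
  hausdorff_measure rho s A = 0 <->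
  forall del eps : R, (0 < del)%R -> (0 < eps)%R ->
    exists2 U, delta_cover rho del A U & hausdorff_sum rho s U <= eps%:E.
Proof.
split=> [A0 del eps del0 eps0 | small].
  have : hausdorff_approx rho s del A < eps%:E.
    by rewrite (@le_lt_trans _ _ 0) ?lte_fin // -A0; apply: ereal_sup_ubound; exists del.
  by move=> /ereal_inf_lt [_ [U AU <-] /ltW]; exists U.
apply/le_anti; apply/andP; split; last first.
  apply: le_trans (hausdorff_approx_ge0 s 1%R A) _.
  by apply: ereal_sup_ubound; exists 1%R => //=; exact: ltr01.
rewrite /hausdorff_measure; apply/ereal_supP => _ [del del0 <-].
apply/lee_addgt0Pr => eps eps0; rewrite add0e.
have [U AU Ueps] := small del eps del0 eps0.
by apply: le_trans Ueps; apply: ereal_inf_lbound; exists U.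
Qed.

Lemma hausdorff_dim_le s A :
  (0 < s)%R -> hausdorff_measure rho s A = 0 -> hausdorff_dim rho A <= s%:E.
Proof. by move=> s0 As; apply: ereal_inf_lbound; exists s. Qed.

Lemma hausdorff_dim_le_of_gt s A : (0 <= s)%R ->
  (forall t, (s < t)%R -> hausdorff_measure rho t A = 0) -> hausdorff_dim rho A <= s%:E.
Proof.
move=> s0 At; apply: lee_of_gtr => r; rewrite lte_fin => sr.
exact: hausdorff_dim_le (le_lt_trans s0 sr) (At r sr).
Qed.

End HausdorffMeasure.

Lemma hausdorff_dim_le_scale (R : realType) (T T' : Type) (rho : T -> T -> R)
    (rho' : T' -> T' -> R) (A : set T') (B : set T) (a : R) : 0 < a ->
  (forall s, 0 < s -> hausdorff_measure rho s B = 0 ->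
     hausdorff_measure rho' (s / a) A = 0) ->
  (hausdorff_dim rho' A <= hausdorff_dim rho B * (a^-1)%:E)%E.
Proof.
move=> a0 BA; apply: lee_of_gtr => r Br.
have : (hausdorff_dim rho B < (r * a)%:E)%E.
  rewrite ltNge; apply: contraTN Br => Bra; rewrite -leNgt.
  rewrite -[r](mulfK (lt0r_neq0 a0)) EFinM lee_wpmul2r // lee_fin invr_ge0.
  exact: ltW.
move=> /ereal_inf_lt [_ [s [s0 Bs] <-]]; rewrite lte_fin => sra.
apply: le_trans (hausdorff_dim_le (divr_gt0 s0 a0) (BA s s0 Bs)) _.
by rewrite lee_fin ler_pdivrMr //; exact: ltW.
Qed.

Definition metric_cvg (R : realType) (T : Type) (rho : T -> T -> R)
    (u : nat -> T) (x : T) : Prop :=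
  forall e : R, 0 < e -> exists N, forall k, (N <= k)%N -> rho (u k) x < e.

Lemma ltn_homo_infl (p : nat -> nat) : {homo p : i j / (i < j)%N} -> forall k, (k <= p k)%N.
Proof. by move=> ip; elim=> // k IHk; exact: leq_ltn_trans IHk (ip _ _ (ltnSn k)). Qed.

Section MetricConvergence.
Variables (R : realType) (T : Type) (rho : T -> T -> R).

Lemma metric_cvg_sub (u : nat -> T) x (p : nat -> nat) :
  {homo p : i j / (i < j)%N} -> metric_cvg rho u x -> metric_cvg rho (u \o p) x.
Proof.
move=> ip ux e e0; have [N uN] := ux e e0.
by exists N => k Nk; apply: uN; exact: leq_trans Nk (ltn_homo_infl ip k).
Qed.

Lemma metric_compact_sub (A : set T) (u : nat -> T) :
  metric_compact rho A -> (forall k, A (u k)) ->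
  exists p : nat -> nat, exists2 x,
    {homo p : i j / (i < j)%N} & A x /\ metric_cvg rho (u \o p) x.
Proof.
move=> cA Au; have [p [x [Ax [ip upx]]]] := cA u Au.
by exists p, x; first exact: homo_ltn ltn_trans ip.
Qed.

End MetricConvergence.

Lemma le0_of_le_mulr (R : realType) (x c : R) :
  0 <= c -> (forall e, 0 < e -> x <= c * e) -> x <= 0.
Proof.
move=> c0 xc; apply/ler_addgt0Pr => e e0; rewrite add0r.
have c1 : 0 < c + 1 by lra.
apply: le_trans (xc _ (divr_gt0 e0 c1)) _.
by rewrite mulrA ler_pdivrMr //; nra.
Qed.

Lemma metric_cvg_euc_unique (R : realType) (k : nat) (u : nat -> 'rV[R]_k) a b :
  metric_cvg (@euc_dist R k) u a -> metric_cvg (@euc_dist R k) u b -> a = b.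
Proof.
move=> ua ub; apply/eqP; rewrite -subr_eq0; apply/eqP/eucl_le0.
apply: (@le0_of_le_mulr _ _ (k%:R * 2)) => [|e e0]; first by rewrite mulr_ge0.
have [N1 uN1] := ua e e0; have [N2 uN2] := ub e e0.
pose m := maxn N1 N2.
have -> : a - b = (a - u m) + (u m - b) by rewrite addrA subrK.
apply: le_trans (euclD_le _ _) _; rewrite -mulrA ler_wpM2l // mulr_natl mulr2n.
apply: lerD; apply: ltW; last exact: uN2 (leq_maxr _ _).
by rewrite -[eucl _]/(euc_dist a (u m)) euc_distC; exact: uN1 (leq_maxl _ _).
Qed.

Definition jointly_continuous_on (R : realType) (d n : nat) (D : set 'rV[R]_d)
    (L : Type) (rho : L -> L -> R) (phi : 'rV[R]_d -> L -> 'rV[R]_n) : Prop :=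
  forall xi x, D xi -> forall e, 0 < e -> exists2 del, 0 < del &
    forall xi' x', D xi' -> euc_dist xi' xi < del -> rho x' x < del ->
      euc_dist (phi xi' x') (phi xi x) < e.

Lemma jointly_continuous_cvg (R : realType) (d n : nat) (D : set 'rV[R]_d)
    (L : Type) (rho : L -> L -> R) (phi : 'rV[R]_d -> L -> 'rV[R]_n)
    (xs : nat -> 'rV[R]_d) (ys : nat -> L) xi y :
  jointly_continuous_on D rho phi -> D xi -> (forall k, D (xs k)) ->
  metric_cvg (@euc_dist R d) xs xi -> metric_cvg rho ys y ->
  metric_cvg (@euc_dist R n) (fun k => phi (xs k) (ys k)) (phi xi y).
Proof.
move=> phic Dxi Dxs xsxi ysy e e0.
have [del del0 phidel] := phic xi y Dxi e e0.
have [N1 xsN1] := xsxi del del0; have [N2 ysN2] := ysy del del0.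
exists (maxn N1 N2) => k; rewrite geq_max => /andP[k1 k2].
exact: phidel (Dxs k) (xsN1 k k1) (ysN2 k k2).
Qed.

Section Coincidence.
Variables (R : realType) (d n : nat) (D : set 'rV[R]_d) (L1 L2 : Type).
Variables (rho1 : L1 -> L1 -> R) (rho2 : L2 -> L2 -> R).
Variables (phi1 : 'rV[R]_d -> L1 -> 'rV[R]_n) (phi2 : 'rV[R]_d -> L2 -> 'rV[R]_n).

Lemma coincidence_compact :
  metric_compact (@euc_dist R d) D ->
  metric_compact rho1 setT -> metric_compact rho2 setT ->
  jointly_continuous_on D rho1 phi1 -> jointly_continuous_on D rho2 phi2 ->
  metric_compact (@euc_dist R d) [set xi | D xi /\ exists x1 x2, phi1 xi x1 = phi2 xi x2].
Proof.
move=> cD c1 c2 phi1c phi2c u Du.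
have [w1 /choice[w2 w12]] := choice (fun k => (Du k).2).
have [p1 [xi ip1 [Dxi uxi]]] := metric_compact_sub cD (fun k => (Du k).1).
have [p2 [x1 ip2 [_ w1x1]]] := metric_compact_sub c1 (u := w1 \o p1) (fun=> I).
have [p3 [x2 ip3 [_ w2x2]]] := metric_compact_sub c2 (u := w2 \o p1 \o p2) (fun=> I).
pose P := p1 \o p2 \o p3.
have ip23 : {homo p2 \o p3 : i j / (i < j)%N} by move=> i j ij; exact/ip2/ip3.
have DuP k : D (u (P k)) := (Du _).1.
have uPxi : metric_cvg (@euc_dist R d) (u \o P) xi := metric_cvg_sub ip23 uxi.
have w1Px1 : metric_cvg rho1 (w1 \o P) x1 := metric_cvg_sub ip3 w1x1.
exists P, xi; split; [split=> //; exists x1, x2 | split=> [k|//]]; last exact/ip1/ip23.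
apply: (@metric_cvg_euc_unique _ _ (fun k => phi1 (u (P k)) (w1 (P k)))).
  exact: jointly_continuous_cvg phi1c Dxi DuP uPxi w1Px1.
rewrite (_ : (fun k => _) = fun k => phi2 (u (P k)) (w2 (P k))); last first.
  by apply/funext => k; exact: w12.
exact: jointly_continuous_cvg phi2c Dxi DuP uPxi w2x2.
Qed.

End Coincidence.

Section HolderImage.
Variables (R : realType) (T T' : Type) (rho : T -> T -> R) (rho' : T' -> T' -> R).
Variables (G : T -> T' -> Prop) (K a : R).
Hypotheses (rho_ge0 : forall p q, 0 <= rho p q) (K_ge0 : 0 <= K) (a_gt0 : 0 < a).
Hypothesis G_holder : forall p q x y, G p x -> G q y -> rho' x y <= K * rho p q `^ a.

(* Working with K + 1 keeps the mesh (del / K1) ^ (1 / a) meaningful when K = 0. *)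
Let K1 := K + 1.
Let K1_gt0 : 0 < K1. Proof. exact: ltr_wpDl K_ge0 ltr01. Qed.

Lemma diam_holder_image (U : set T) (b : R) : (diam rho U <= b%:E)%E ->
  (diam rho' [set y | exists2 p, U p & G p y] <= (K1 * fine (diam rho U) `^ a)%:E)%E.
Proof.
move=> Ub; apply: diam_le => [|x y [p Up Gpx] [q Uq Gqy]].
  by rewrite mulr_ge0 ?powR_ge0 ?ltW.
apply: le_trans (G_holder Gpx Gqy) _; apply: ler_pM; rewrite ?powR_ge0 //.
  by rewrite /K1 lerDl.
apply: ge0_ler_powR; rewrite ?nnegrE ?fine_diam_ge0 ?rho_ge0 ?(ltW a_gt0) //.
exact: (le_fine_diam Ub Up Uq).
Qed.

Lemma hausdorff_measure0_holder_image (A : set T') (B : set T) (s : R) : 0 < s ->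
  A `<=` [set y | exists2 p, B p & G p y] ->
  hausdorff_measure rho s B = 0 -> hausdorff_measure rho' (s / a) A = 0.
Proof.
move=> s0 AB /hausdorff_measure_eq0P B0; apply/hausdorff_measure_eq0P => del eps del0 eps0.
pose r := (del / K1) `^ a^-1.
have r0 : 0 < r by apply: powR_gt0; exact: divr_gt0.
have ra : r `^ a = del / K1.
  by rewrite -powRrM mulVf ?gt_eqF // powRr1 // ltW // divr_gt0.
pose c := K1 `^ (s / a).
have c0 : 0 < c by exact: powR_gt0.
have [U [BU Ur] Ueps] := B0 r (eps / c) r0 (divr_gt0 eps0 c0).
pose V i := [set y | exists2 p, U i p & G p y].
have VU i : (fine (diam rho' (V i)) `^ (s / a) <= c * fine (diam rho (U i)) `^ s).
  have -> : c * fine (diam rho (U i)) `^ s = (K1 * fine (diam rho (U i)) `^ a) `^ (s / a).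
    by rewrite powRM ?powR_ge0 ?(ltW K1_gt0) // -powRrM (mulrC a) divfK ?gt_eqF.
  apply: ge0_ler_powR; rewrite ?nnegrE ?fine_diam_ge0 ?mulr_ge0 ?powR_ge0 ?invr_ge0
    ?(ltW K1_gt0) ?(ltW s0) ?(ltW a_gt0) //.
  exact: (fine_diam_le (diam_holder_image (Ur i))).
exists V; first split.
- move=> y /AB [p Bp Gpy]; have [i _ Uip] := BU p Bp.
  by exists i => //; exists p.
- move=> i; apply: le_trans (diam_holder_image (Ur i)) _; rewrite lee_fin.
  rewrite -[del](divfK (lt0r_neq0 K1_gt0)) -ra mulrC ler_pM2r //.
  apply: ge0_ler_powR; rewrite ?nnegrE ?fine_diam_ge0 ?(ltW a_gt0) ?(ltW r0) //.
  exact: (fine_diam_le (Ur i)).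
- apply: le_trans (_ : (c%:E * hausdorff_sum rho s U <= _)%E).
    rewrite /hausdorff_sum -nneseriesZl; last by move=> i _; rewrite lee_fin powR_ge0.
    apply: lee_nneseries => [i _ _|i _]; first by rewrite lee_fin powR_ge0.
    by rewrite -EFinM lee_fin VU.
  have -> : eps = c * (eps / c) by rewrite mulrC divfK ?gt_eqF.
  by rewrite EFinM lee_wpmul2l // lee_fin ltW.
Qed.

End HolderImage.

Section CoincidenceHolder.
Variables (R : realType) (d n : nat) (D : set 'rV[R]_d) (L1 L2 : Type).
Variables (rho1 : L1 -> L1 -> R) (rho2 : L2 -> L2 -> R).
Variables (phi1 : 'rV[R]_d -> L1 -> 'rV[R]_n) (phi2 : 'rV[R]_d -> L2 -> 'rV[R]_n).
Variables (C alpha M : R).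
Hypotheses (rho1_ge0 : forall x y, 0 <= rho1 x y) (rho1C : forall x y, rho1 x y = rho1 y x).
Hypothesis rho2_ge0 : forall x y, 0 <= rho2 x y.
Hypotheses (C_ge0 : 0 <= C) (alpha_ge0 : 0 <= alpha) (M_gt0 : 0 < M).
Hypothesis phi1_holder :
  forall xi x y, D xi -> euc_dist (phi1 xi x) (phi1 xi y) <= C * (rho1 x y) `^ alpha.
Hypothesis phi2_holder :
  forall xi x y, D xi -> euc_dist (phi2 xi x) (phi2 xi y) <= C * (rho2 x y) `^ alpha.
Hypothesis transversal : forall x1 x2 xi xi', D xi -> D xi' ->
  M * euc_dist xi' xi <= eucl ((phi1 xi' x1 - phi2 xi' x2) - (phi1 xi x1 - phi2 xi x2)).

Lemma coincidence_holder (p q : L1 * L2) a b :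
  D a -> phi1 a p.1 = phi2 a p.2 -> D b -> phi1 b q.1 = phi2 b q.2 ->
  euc_dist a b <= n%:R * (C + C) / M * prod_dist rho1 rho2 p q `^ alpha.
Proof.
case: p q => [x1 x2] [y1 y2] /= Da ea Db eb; set r := prod_dist _ _ _ _.
have r_ge0 : 0 <= r by rewrite le_max rho1_ge0.
have rpow t : 0 <= t -> t <= r -> C * t `^ alpha <= C * r `^ alpha.
  by move=> t0 tr; apply: ler_wpM2l => //; apply: ge0_ler_powR.
have h1 : eucl (phi1 b y1 - phi1 b x1) <= C * r `^ alpha.
  apply: le_trans (phi1_holder y1 x1 Db) (rpow _ (rho1_ge0 _ _) _).
  by rewrite rho1C le_max lexx.
have h2 : eucl (phi2 b x2 - phi2 b y2) <= C * r `^ alpha.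
  apply: le_trans (phi2_holder x2 y2 Db) (rpow _ (rho2_ge0 _ _) _).
  by rewrite le_max lexx orbT.
(* As Phi vanishes at (a, x1, x2) and (b, y1, y2), its increment only involves values at b. *)
have := transversal x1 x2 Db Da.
rewrite (_ : _ - _ = (phi1 b y1 - phi1 b x1) + (phi2 b x2 - phi2 b y2)); last first.
  by rewrite ea eb subrr sub0r opprB [RHS]addrC addrA subrK.
move=> /le_trans /(_ (euclD_le _ _)) Mab.
rewrite mulrAC ler_pdivlMr // mulrC (le_trans Mab) // -mulrA ler_wpM2l // mulrDl.
exact: lerD.
Qed.

End CoincidenceHolder.

Lemma metric_compact_bounded (R : realType) (k : nat) (A : set 'rV[R]_k) :
  metric_compact (@euc_dist R k) A -> exists2 B, 0 < B & forall xi, A xi -> eucl xi <= B.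
Proof.
move=> cA; apply: contrapT => unbounded.
have big m : exists xi, A xi /\ m.+1%:R < eucl xi.
  apply: contrapT => small; apply: unbounded; exists m.+1%:R => // xi Axi.
  by rewrite leNgt; apply/negP => mxi; apply: small; exists xi.
have [u uP] := choice big.
have [p [x ip [_ upx]]] := metric_compact_sub cA (fun m => (uP m).1).
have [N upN] := upx 1 ltr01.
pose c := k%:R * (1 + eucl x); pose m := maxn N (Num.truncn c).
have : eucl (u (p m)) <= c.
  rewrite -(subrK x (u (p m))); apply: le_trans (euclD_le _ _) _.
  by apply: ler_wpM2l; rewrite ?ler0n // lerD2r ltW // upN // leq_maxl.
rewrite leNgt => /negP; apply; apply: lt_trans (uP (p m)).2.
apply: lt_le_trans (truncnS_gt c) _; rewrite ler_nat ltnS.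
exact: leq_trans (leq_maxr N _) (ltn_homo_infl ip m).
Qed.

Lemma cell_index_bound (R : realType) (h y : R) (m : nat) :
  0 < h -> 0 <= y <= m.+1%:R * h ->
  (minn (Num.truncn (y / h)) m)%:R * h <= y <= (minn (Num.truncn (y / h)) m)%:R * h + h.
Proof.
move=> h0 /andP[y0 ym].
have := truncn_itv (divr_ge0 y0 (ltW h0)); set t := Num.truncn _ => /andP[ty yt].
rewrite ler_pdivlMr // in ty; rewrite ltr_pdivrMr // -natr1 mulrDl mul1r in yt.
case: (leqP t m) => [tm|mt]; first by rewrite ty ltW.
rewrite -[X in _ + X]mul1r -mulrDl natr1 ym andbT.
by apply: le_trans ty; rewrite ler_pM2r // ler_nat ltnW.
Qed.

Lemma grid_cover (R : realType) (d : nat) (A : set 'rV[R]_d) (B : R) (m : nat) :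
  0 < B -> (forall xi j, A xi -> `|xi ord0 j| <= B) ->
  exists U : nat -> set 'rV[R]_d, [/\ A `<=` \bigcup_i U i,
    forall i, (diam (@euc_dist R d) (U i) <= (d%:R * (2 * B / m.+1%:R))%:E)%E &
    forall i, (m.+1 ^ d <= i)%N -> U i = set0].
Proof.
move=> B0 AB; pose h := 2 * B / m.+1%:R.
have h0 : 0 < h by rewrite divr_gt0 ?mulr_gt0.
have mh : m.+1%:R * h = 2 * B by rewrite mulrC divfK.
pose cell (f : {ffun 'I_d -> 'I_m.+1}) (xi : 'rV[R]_d) :=
  forall j, - B + (f j)%:R * h <= xi ord0 j <= - B + (f j)%:R * h + h.
exists (fun i => [set xi | exists2 f, enum_rank f = i :> nat & cell f xi]); split.
- move=> xi Axi; pose t j := minn (Num.truncn ((xi ord0 j + B) / h)) m.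
  pose f : {ffun 'I_d -> 'I_m.+1} := [ffun j => inord (t j)].
  exists (enum_rank f : nat) => //; exists f => // j.
  have := AB xi j Axi; rewrite ler_norml => /andP[xiB Bxi].
  have /cell_index_bound : 0 <= xi ord0 j + B <= m.+1%:R * h by rewrite mh; apply/andP; lra.
  by rewrite ffunE inordK ?ltnS ?geq_minr // => /(_ h0); rewrite -/(t j) => /andP[]; lra.
- move=> i; apply: diam_le => [|x y [f <- xf] [g /val_inj/enum_rank_inj gf yg]].
    by rewrite mulr_ge0 ?ler0n //; exact: ltW.
  rewrite /euc_dist; apply: eucl_le_box => j; rewrite !mxE ler_norml.
  by have := xf j; have := yg j; rewrite gf -/h => /andP[? ?] /andP[? ?]; apply/andP; lra.
- move=> i mi; apply/seteqP; split=> // xi [f fi _].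
  by move: (ltn_ord (enum_rank f)); rewrite fi card_ffun !card_ord ltnNge mi.
Qed.

Lemma hausdorff_sum_finite_le (R : realType) (T : Type) (rho : T -> T -> R) (s r : R)
    (U : nat -> set T) (N : nat) : 0 < s ->
  (forall i, (diam rho (U i) <= r%:E)%E) -> (forall i, (N <= i)%N -> U i = set0) ->
  (hausdorff_sum rho s U <= (N%:R * r `^ s)%:E)%E.
Proof.
move=> s0 Ur U0; have r0 : 0 <= r by rewrite -lee_fin (le_trans (diam_ge0 _ _) (Ur 0%N)).
rewrite /hausdorff_sum (nneseries_split 0 N); last by move=> i _; rewrite lee_fin powR_ge0.
rewrite [X in (_ + X)%E]eseries0 ?adde0 => [|i Ni _]; last first.
  by rewrite U0 // diam_set0 /= powR0 ?gt_eqF.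
apply: (@le_trans _ _ (\sum_(0 <= i < N) (r `^ s)%:E)%E).
  rewrite add0n; apply: lee_sum => i _; rewrite lee_fin.
  apply: ge0_ler_powR; rewrite ?nnegrE ?fine_diam_ge0 ?(ltW s0) //.
  exact: (fine_diam_le (Ur i)).
by rewrite sumEFin sumr_const_nat subn0 mulr_natl.
Qed.

(* N ^ d * (a / N) ^ s = a ^ s / N ^ (s - d), whence the threshold on N. *)
Lemma grid_cost_le (R : realType) (d : nat) (a s eps N : R) :
  0 <= a -> d%:R < s -> 0 < eps ->
  (a `^ s / eps) `^ (s - d%:R)^-1 < N -> N ^+ d * (a / N) `^ s <= eps.
Proof.
move=> a0 ds eps0 Nbig.
have sd0 : 0 < s - d%:R by rewrite subr_gt0.
have N0 : 0 < N := le_lt_trans (powR_ge0 _ _) Nbig.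
have Nsd0 : 0 < N `^ (s - d%:R) by exact: powR_gt0.
have Ns : N `^ s = N ^+ d * N `^ (s - d%:R).
  by rewrite -powR_mulrn ?(ltW N0) // -powRD ?(gt_eqF N0) ?implybT // addrC subrK.
have aN : (a / N) `^ s * N `^ s = a `^ s.
  by rewrite -powRM ?divfK ?(gt_eqF N0) ?divr_ge0 ?(ltW N0).
have cN : a `^ s / eps <= N `^ (s - d%:R).
  have -> : a `^ s / eps = ((a `^ s / eps) `^ (s - d%:R)^-1) `^ (s - d%:R).
    by rewrite -powRrM mulVf ?gt_eqF // powRr1 // divr_ge0 ?powR_ge0 // ltW.
  by apply: ge0_ler_powR; rewrite ?nnegrE ?powR_ge0 ?(ltW sd0) ?(ltW N0) ?(ltW Nbig).
by rewrite -(ler_pM2r Nsd0) mulrAC -Ns mulrC aN mulrC -ler_pdivrMr.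
Qed.

Lemma hausdorff_measure_bounded0 (R : realType) (d : nat) (A : set 'rV[R]_d) (B s : R) :
  0 < B -> (forall xi, A xi -> eucl xi <= B) -> d%:R < s ->
  hausdorff_measure (@euc_dist R d) s A = 0.
Proof.
move=> B0 AB ds; have s0 : 0 < s := le_lt_trans (ler0n _ _) ds.
have Acoord xi j : A xi -> `|xi ord0 j| <= B.
  by move=> Axi; apply: le_trans (normr_coord_le_eucl _ _) (AB _ Axi).
apply/hausdorff_measure_eq0P => del eps del0 eps0.
pose a := d%:R * (2 * B).
have a0 : 0 <= a by rewrite mulr_ge0 ?ler0n // mulr_ge0 // ltW.
pose m := Num.truncn (Num.max ((a `^ s / eps) `^ (s - d%:R)^-1) (a / del)).
have /andP[m_cost m_del] : ((a `^ s / eps) `^ (s - d%:R)^-1 < m.+1%:R) && (a / del < m.+1%:R).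
  by rewrite -gt_max; exact: truncnS_gt.
have [U [AU Udiam U0]] := grid_cover m B0 Acoord.
exists U; first split=> // i.
  apply: le_trans (Udiam i) _; rewrite lee_fin mulrA -/a ler_pdivrMr ?ltr0Sn // mulrC.
  by rewrite ltr_pdivrMr // in m_del; exact: ltW.
apply: le_trans (hausdorff_sum_finite_le s0 Udiam U0) _.
by rewrite lee_fin natrX mulrA -/a; exact: grid_cost_le.
Qed.

Theorem theorem13 (R : realType) (d n : nat) (D : set 'rV[R]_d)
  (L1 L2 : Type) (rho1 : L1 -> L1 -> R) (rho2 : L2 -> L2 -> R)
  (phi1 : 'rV[R]_d -> L1 -> 'rV[R]_n) (phi2 : 'rV[R]_d -> L2 -> 'rV[R]_n)
  (C alpha M : R) :
  metric_compact (@euc_dist R d) D ->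
  is_metric rho1 -> metric_compact rho1 setT ->
  is_metric rho2 -> metric_compact rho2 setT ->
  (* continuity of phi1 on D x L1 *)
  (forall xi x, D xi -> forall e, 0 < e -> exists2 del, 0 < del &
     forall xi' x', D xi' -> euc_dist xi' xi < del -> rho1 x' x < del ->
       euc_dist (phi1 xi' x') (phi1 xi x) < e) ->
  (* continuity of phi2 on D x L2 *)
  (forall xi x, D xi -> forall e, 0 < e -> exists2 del, 0 < del &
     forall xi' x', D xi' -> euc_dist xi' xi < del -> rho2 x' x < del ->
       euc_dist (phi2 xi' x') (phi2 xi x) < e) ->
  (* (a) Hoelder condition in x *)
  0 < C -> 0 < alpha -> alpha <= 1 ->
  (forall xi x y, D xi -> euc_dist (phi1 xi x) (phi1 xi y) <= C * (rho1 x y) `^ alpha) ->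
  (forall xi x y, D xi -> euc_dist (phi2 xi x) (phi2 xi y) <= C * (rho2 x y) `^ alpha) ->
  (* (b) transversality *)
  0 < M ->
  (forall x1 x2 xi xi', D xi -> D xi' ->
     M * euc_dist xi' xi <=
     eucl ((phi1 xi' x1 - phi2 xi' x2) - (phi1 xi x1 - phi2 xi x2))) ->
  let Delta := [set xi | D xi /\ exists x1 x2, phi1 xi x1 = phi2 xi x2] in
  metric_compact (@euc_dist R d) Delta /\
  (hausdorff_dim (@euc_dist R d) Delta <=
     Order.min (hausdorff_dim (prod_dist rho1 rho2) setT * (alpha^-1)%:E) (d%:R)%:E)%E.
Proof.
move=> cD [rho1_ge0 [_ [rho1C _]]] c1 [rho2_ge0 _] c2 phi1c phi2c C0 alpha0 _
  phi1_holder phi2_holder M0 transversal Delta.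
split; first exact: coincidence_compact cD c1 c2 phi1c phi2c.
rewrite le_min; apply/andP; split.
- apply: (hausdorff_dim_le_scale alpha0) => s s0.
  have prod_dist_ge0 p q : 0 <= prod_dist rho1 rho2 p q by rewrite le_max rho1_ge0.
  have K_ge0 : 0 <= n%:R * (C + C) / M.
    by rewrite divr_ge0 ?mulr_ge0 ?addr_ge0 ?(ltW C0) ?(ltW M0).
  apply: (hausdorff_measure0_holder_image prod_dist_ge0 K_ge0 alpha0
    (G := fun p xi => D xi /\ phi1 xi p.1 = phi2 xi p.2)) s0 _.
    move=> p q a b [Da ea] [Db eb].
    exact: (coincidence_holder rho1_ge0 rho1C rho2_ge0 (ltW C0) (ltW alpha0) M0
      phi1_holder phi2_holder transversal Da ea Db eb).
  by move=> xi [Dxi [x1 [x2 e12]]]; exists (x1, x2).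
- have [B B0 DB] := metric_compact_bounded cD.
  apply: hausdorff_dim_le_of_gt (ler0n _ _) _ => s ds.
  by apply: hausdorff_measure_bounded0 B0 _ ds => xi [Dxi _]; exact: DB.
Qed.
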